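(* For every positive integer $n$ there exists an addition chain producing $2^n-1$ whose length $\delta(2^n-1)$ satisfies $$\delta(2^n-1)\leq 2n-1-\left\lfloor \frac{n-1}{2^{\lfloor \frac{\log n}{\log 2}\rfloor}}\right\rfloor-\left\lfloor \frac{\log n}{\log 2}\right\rfloor+\iota(n).$$
   Context: An addition chain producing $N$ is a sequence $1,2,s_3,\ldots,s_k=N$ in which every term after the first is the sum of two (not necessarily distinct) earlier terms; its length is the number of terms excluding the initial $1$. $\iota(N)$ denotes the length of the shortest addition chain producing $N$. $\lfloor\cdot\rfloor$ is the floor function and $\log$ the natural logarithm. *)

From mathcomp Require Import all_boot all_order all_algebra.
Set Implicit Arguments. Unset Strict Implicit. Unset Printing Implicit Defensive.

(* An addition chain is represented by the list c of its terms after the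
   initial 1, i.e. the full chain is s = 1 :: c.  Its length is size c. *)
Definition is_addition_chain (c : seq nat) : bool :=
  let s := 1 :: c in
  all (fun i => has (fun j => has (fun k => nth 0 s i == nth 0 s j + nth 0 s k)
                                  (iota 0 i))
                    (iota 0 i))
      (iota 1 (size c)).

Definition chain_producing (N : nat) (c : seq nat) : bool :=
  is_addition_chain c && (last 1 c == N).

Definition is_shortest_chain_length (N l : nat) : Prop :=
  (exists c, chain_producing N c /\ size c = l) /\
  (forall c, chain_producing N c -> l <= size c).

(* The binary method (square-and-multiply, additively: double, then add 1)
   produces 2^n - 1 in 2(n - 1) steps.  This already meets the bound: with
   k = floor(log2 n), the floor (n - 1) / 2^k is 0 or 1 because n < 2^(k+1),
   and iota(n) >= k because every term of an addition chain is at most twice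
   the previous maximum, so a chain of length l produces at most 2^l. *)

From mathcomp Require Import all_boot all_order all_algebra.
From mathcomp Require Import zify.

Set Implicit Arguments.
Unset Strict Implicit.
Unset Printing Implicit Defensive.

Lemma is_addition_chain_rcons (c : seq nat) a b :
  is_addition_chain c -> a \in 1 :: c -> b \in 1 :: c ->
  is_addition_chain (rcons c (a + b)).
Proof.
move=> hc ha hb.
have nth_prefix j : j < (size c).+1 ->
    nth 0 (1 :: rcons c (a + b)) j = nth 0 (1 :: c) j.
  by move=> hj; rewrite -rcons_cons nth_rcons /= hj.
rewrite /is_addition_chain size_rcons -[(size c).+1]addn1 iotaD all_cat.
rewrite add1n [iota _ 1]/= all_seq1.
apply/andP; split.
  apply: etrans hc; apply: eq_in_all => i; rewrite mem_iota => /andP [_ hi].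
  apply: eq_in_has => j; rewrite mem_iota => /andP [_ hj].
  apply: eq_in_has => k; rewrite mem_iota => /andP [_ hk].
  by rewrite !nth_prefix //; lia.
have ia := index_mem a (1 :: c); rewrite ha in ia.
have ib := index_mem b (1 :: c); rewrite hb in ib.
apply/hasP; exists (index a (1 :: c)); first by rewrite mem_iota.
apply/hasP; exists (index b (1 :: c)); first by rewrite mem_iota.
by rewrite [X in X == _]/= nth_rcons ltnn eqxx !nth_prefix // !nth_index.
Qed.

Lemma is_addition_chain_nth_leq_exp2 (c : seq nat) i :
  is_addition_chain c -> i <= size c -> nth 0 (1 :: c) i <= 2 ^ i.
Proof.
move=> hc; elim/ltn_ind: i => [[|i]] // IH hi.
have : i.+1 \in iota 1 (size c) by rewrite mem_iota; lia.
move/(allP hc) => /hasP [j]; rewrite mem_iota => /andP [_ hj].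
move=> /hasP [k]; rewrite mem_iota => /andP [_ hk] /eqP ->.
have le_j : 2 ^ j <= 2 ^ i by rewrite leq_exp2l.
have le_k : 2 ^ k <= 2 ^ i by rewrite leq_exp2l.
have := IH j hj; have := IH k hk; rewrite expnS; lia.
Qed.

Lemma chain_producing_leq_exp2 (N : nat) (c : seq nat) :
  chain_producing N c -> N <= 2 ^ size c.
Proof.
case/andP=> hc /eqP <-.
have /= <- := nth_last 0 (1 :: c).
exact: is_addition_chain_nth_leq_exp2.
Qed.

Lemma trunc_log2_leq_size_chain (N : nat) (c : seq nat) :
  0 < N -> chain_producing N c -> trunc_log 2 N <= size c.
Proof.
move=> N_gt0 hNc; rewrite -(leq_exp2l _ _ (ltnSn 1)).
exact: leq_trans (trunc_logP (ltnSn 1) N_gt0) (chain_producing_leq_exp2 hNc).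
Qed.

Lemma divn_trunc_log2_lt2 (N : nat) : (N - 1) %/ 2 ^ trunc_log 2 N < 2.
Proof.
case: N => [|N]; first by rewrite div0n.
rewrite ltn_divLR ?expn_gt0 // -expnS subn1.
exact: ltnW (trunc_log_ltn _ (ltnSn 1)).
Qed.

Fixpoint binary_chain (m : nat) : seq nat :=
  if m is m'.+1 then
    let x := last 1 (binary_chain m') in
    rcons (rcons (binary_chain m') (x + x)) (x + x + 1)
  else [::].

Lemma size_binary_chain m : size (binary_chain m) = m.*2.
Proof. by elim: m => //= m IH; rewrite !size_rcons IH. Qed.

Lemma last_binary_chain m : last 1 (binary_chain m) = 2 ^ m.+1 - 1.
Proof.
elim: m => //= m IH; rewrite !last_rcons IH (expnS 2 m.+1).
by have := expn_gt0 2 m.+1; lia.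
Qed.

Lemma binary_chain_is_addition_chain m : is_addition_chain (binary_chain m).
Proof.
elim: m => //= m IH.
apply: is_addition_chain_rcons; last exact: mem_head.
  by apply: is_addition_chain_rcons => //; apply: mem_last.
by rewrite -rcons_cons mem_rcons mem_head.
Qed.

Lemma binary_chain_producing m :
  chain_producing (2 ^ m.+1 - 1) (binary_chain m).
Proof.
by rewrite /chain_producing binary_chain_is_addition_chain last_binary_chain /=.
Qed.

Local Open Scope ring_scope.

Theorem mainTheorem11 (n : nat) (hn : (0 < n)%N) (iota_n : nat)
    (hiota : is_shortest_chain_length n iota_n) :
  exists c : seq nat,
    chain_producing (2 ^ n - 1) c /\
    ((size c)%:Z <= (2 * n)%:Z - 1
                    - ((n - 1) %/ 2 ^ trunc_log 2 n)%N%:Z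
                    - (trunc_log 2 n)%:Z + iota_n%:Z).
Proof.
case: n hn hiota => [|m] // _ [[c [hc <-]] _].
exists (binary_chain m); split; first exact: binary_chain_producing.
have := trunc_log2_leq_size_chain (ltn0Sn m) hc.
have := divn_trunc_log2_lt2 m.+1.
rewrite size_binary_chain; lia.
Qed.
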